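(* Let $\mathcal G$ be a 2-group such that the sets of objects $\mathcal G_0$, morphisms $\mathcal G_1$ and composable morphisms are manifolds, all structure maps (source $s$, target $t$, identity, composition) are smooth, and the multiplication functor $\otimes$, the inversion functor $\overline{\,\cdot\,}$ and the associator $\alpha$ are smooth. If $s^{-1}(\mathbb1)\subseteq\mathcal G_1$ is discrete in the induced topology, then the map $(\mathcal G_0)^3\to s^{-1}(\mathbb1)$, $(g,h,k)\mapsto\alpha(g,h,k)\otimes\mathrm{id}_{\overline{(g\otimes h)\otimes k}}$, is locally constant.
   Context: Manifolds are modelled on locally convex spaces. A 2-group is a small category $\mathcal G$ with a multiplication functor $\otimes\colon\mathcal G\times\mathcal G\to\mathcal G$, an inversion functor $\overline{\,\cdot\,}\colon\mathcal G\to\mathcal G$, a unit object $\mathbb1$ and natural isomorphisms (associators) $\alpha(g,h,k)=\alpha_{g,h,k}\colon(g\otimes h)\otimes k\to g\otimes(h\otimes k)$ such that $g\otimes\mathbb1=g=\mathbb1\otimes g$ and $g\otimes\overline g=\mathbb1=\overline g\otimes g$ on objects and morphisms (with $\mathbb 1$ identified with $\mathrm{id}_{\mathbb1}$), $\alpha$ satisfies the pentagon identity $\alpha_{g,h,k\otimes l}\circ\alpha_{g\otimes h,k,l}=(\mathrm{id}_g\otimes\alpha_{h,k,l})\circ\alpha_{g,h\otimes k,l}\circ(\alpha_{g,h,k}\otimes\mathrm{id}_l)$, $\alpha_{g,h,k}$ is an identity if one of $g,h,k$ is $\mathbb1$, and $\alpha_{g,\overline g,g}=\mathrm{id}_g$,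 $\alpha_{\overline g,g,\overline g}=\mathrm{id}_{\overline g}$. *)

From HB Require Import structures.
From mathcomp Require Import all_boot all_order all_algebra.
From mathcomp Require Import all_classical all_reals all_analysis.
Set Implicit Arguments. Unset Strict Implicit. Unset Printing Implicit Defensive.
Import Order.TTheory GRing.Theory Num.Theory.
Local Open Scope classical_set_scope.
Local Open Scope ring_scope.

Section Bastiani.
Variable R : realType.

Definition diffquot (E F : tvsType R) (f : E -> F) (x v : E) : R -> F :=
  fun t => t^-1 *: (f (x + t *: v) - f x).

Definition dir_derivable (E F : tvsType R) (f : E -> F) (x v : E) : Prop :=
  exists l : F, diffquot f x v t @[t --> 0^'] --> l.

(* the directional derivative df(x)(v): a (for Hausdorff F, the) limit of the
   difference quotient as t -> 0, t <> 0; 0 if there is none *)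
Definition ddiff (E F : tvsType R) (f : E -> F) (x v : E) : F :=
  match pselect (dir_derivable f x v) with
  | left h => proj1_sig (cid h)
  | right _ => 0
  end.

(* Bastiani C^k on a set U: f continuous on U, and (for k >= 1) all directional
   derivatives exist on U and df : U x E -> F is C^(k-1). *)
Fixpoint Ck (k : nat) (E F : tvsType R) (U : set E) (f : E -> F) {struct k} : Prop :=
  {within U, continuous f} /\
  match k with
  | 0 => True
  | k'.+1 => (forall x v, U x -> dir_derivable f x v) /\
             Ck k' (U `*` [set: E]) (fun p : E * E => ddiff f p.1 p.2)
  end.

Definition smooth_on (E F : tvsType R) (U : set E) (f : E -> F) : Prop :=
  open U /\ forall k, Ck k U f.

Record chart (E : tvsType R) (M : Type) := Chart {
  ch_dom : set M; ch_map : M -> E; ch_inv : E -> M }.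

Definition atlas_open (E : tvsType R) (M : Type) (A : set (chart E M)) (B : set M) :=
  forall c, A c -> open (ch_map c @` (B `&` ch_dom c)).

Definition is_manifold (E : tvsType R) (M : Type) (A : set (chart E M)) : Prop :=
  [/\ hausdorff_space E,
      (forall x : M, exists2 c, A c & ch_dom c x),
      (forall c, A c -> forall x, ch_dom c x -> ch_inv c (ch_map c x) = x),
      (forall c d, A c -> A d ->
          smooth_on (ch_map c @` (ch_dom c `&` ch_dom d)) (ch_map d \o ch_inv c))
    & (forall x y : M, x <> y -> exists B1 B2,
          [/\ atlas_open A B1, atlas_open A B2, B1 x, B2 y & B1 `&` B2 = set0])].

Definition smooth_map (E F : tvsType R) (M N : Type)
    (A : set (chart E M)) (B : set (chart F N)) (f : M -> N) : Prop :=
  (forall W, atlas_open B W -> atlas_open A (f @^-1` W)) /\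
  (forall c d, A c -> B d ->
     smooth_on (ch_map c @` (ch_dom c `&` f @^-1` ch_dom d))
               (ch_map d \o f \o ch_inv c)).

Definition prod_chart (E F : tvsType R) (M N : Type) (c : chart E M) (d : chart F N)
  : chart (E * F)%type (M * N)%type :=
  Chart (ch_dom c `*` ch_dom d)
        (fun p => (ch_map c p.1, ch_map d p.2))
        (fun q => (ch_inv c q.1, ch_inv d q.2)).

Definition prod_atlas (E F : tvsType R) (M N : Type)
    (A : set (chart E M)) (B : set (chart F N)) : set (chart (E * F)%type (M * N)%type) :=
  [set prod_chart c d | c in A & d in B].

End Bastiani.

(* The structure maps of a (strict-unit, strict-inverse) 2-group *)
Record twogroup_ops (G0 G1 : Type) := TwoGroupOps {
  g2src : G1 -> G0;
  g2tgt : G1 -> G0;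
  g2idm : G0 -> G1;
  g2mcomp : G1 -> G1 -> G1;         (* g2mcomp g f = g o f, when g2src g = g2tgt f *)
  g2tens0 : G0 -> G0 -> G0;
  g2tens1 : G1 -> G1 -> G1;
  g2inv0 : G0 -> G0;
  g2inv1 : G1 -> G1;
  g2one : G0;
  g2assoc : G0 -> G0 -> G0 -> G1 }.

Section TwoGroup.
Variables (G0 G1 : Type) (o : twogroup_ops G0 G1).
Local Notation s := (g2src o). Local Notation t := (g2tgt o).
Local Notation id := (g2idm o). Local Notation c := (g2mcomp o).
Local Notation m0 := (g2tens0 o). Local Notation m1 := (g2tens1 o).
Local Notation i0 := (g2inv0 o). Local Notation i1 := (g2inv1 o).
Local Notation e := (g2one o). Local Notation a := (g2assoc o).

Definition category_axioms : Prop :=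
  [/\ (forall x, s (id x) = x /\ t (id x) = x),
      (forall g f, s g = t f -> s (c g f) = s f /\ t (c g f) = t g),
      (forall f, c f (id (s f)) = f /\ c (id (t f)) f = f)
    & (forall h g f, s h = t g -> s g = t f -> c h (c g f) = c (c h g) f)].

Definition tensor_functor : Prop :=
  [/\ (forall f g, s (m1 f g) = m0 (s f) (s g) /\ t (m1 f g) = m0 (t f) (t g)),
      (forall x y, m1 (id x) (id y) = id (m0 x y))
    & (forall f' f g' g, s f' = t f -> s g' = t g ->
          m1 (c f' f) (c g' g) = c (m1 f' g') (m1 f g))].

Definition inversion_functor : Prop :=
  [/\ (forall f, s (i1 f) = i0 (s f) /\ t (i1 f) = i0 (t f)),
      (forall x, i1 (id x) = id (i0 x))
    & (forall g f, s g = t f -> i1 (c g f) = c (i1 g) (i1 f))].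

Definition strict_unit_inverse : Prop :=
  [/\ (forall g, m0 g e = g /\ m0 e g = g),
      (forall f, m1 f (id e) = f /\ m1 (id e) f = f),
      (forall g, m0 g (i0 g) = e /\ m0 (i0 g) g = e)
    & (forall f, m1 f (i1 f) = id e /\ m1 (i1 f) f = id e)].

Definition associator_axioms : Prop :=
  [/\ (forall g h k, s (a g h k) = m0 (m0 g h) k /\ t (a g h k) = m0 g (m0 h k)),
      (forall g h k, exists b, [/\ s b = m0 g (m0 h k), t b = m0 (m0 g h) k,
                                   c b (a g h k) = id (m0 (m0 g h) k)
                                 & c (a g h k) b = id (m0 g (m0 h k))]),
      (forall f1 f2 f3,
          c (a (t f1) (t f2) (t f3)) (m1 (m1 f1 f2) f3)
          = c (m1 f1 (m1 f2 f3)) (a (s f1) (s f2) (s f3))),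
      (forall g h k l,
          c (a g h (m0 k l)) (a (m0 g h) k l)
          = c (m1 (id g) (a h k l)) (c (a g (m0 h k) l) (m1 (a g h k) (id l))))
    & (forall g h, [/\ a e g h = id (m0 g h), a g e h = id (m0 g h),
                        a g h e = id (m0 g h), a g (i0 g) g = id g
                      & a (i0 g) g (i0 g) = id (i0 g)])].

Definition is_2group : Prop :=
  [/\ category_axioms, tensor_functor, inversion_functor,
      strict_unit_inverse & associator_axioms].

End TwoGroup.

Definition composable (G0 G1 : Type) (o : twogroup_ops G0 G1) :=
  {p : G1 * G1 | g2src o p.1 = g2tgt o p.2}.

(* F is built from the associator, the tensor, inversion and identity maps,
   so it is continuous for the atlas topologies. Since alpha(g,h,k) has source
   x = (g h) k, the value F(g,h,k) has source x (x) x^-1 = 1, so F maps into the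
   discrete subspace s^-1(1); a continuous map into a discrete subspace is
   locally constant. *)
From HB Require Import structures.
From mathcomp Require Import all_boot all_order all_algebra.
From mathcomp Require Import all_classical all_reals all_analysis.
Import Order.TTheory GRing.Theory Num.Theory.
Local Open Scope classical_set_scope.
Local Open Scope ring_scope.

Set Implicit Arguments. Unset Strict Implicit.

Section AtlasTopology.
Variable R : realType.
Implicit Types (E F G : tvsType R) (M N K : Type).

Definition atlas_continuous E F M N (A : set (chart E M)) (B : set (chart F N))
    (f : M -> N) :=
  forall W, atlas_open B W -> atlas_open A (f @^-1` W).

Definition atlas_cancel E M (A : set (chart E M)) :=
  forall c, A c -> forall x, ch_dom c x -> ch_inv c (ch_map c x) = x.

Definition open_chart_images E M (A : set (chart E M)) :=
  forall c, A c -> open (ch_map c @` ch_dom c).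

Lemma open_setX E F (P : set E) (Q : set F) : open P -> open Q -> open (P `*` Q).
Proof.
move=> oP oQ; rewrite openE => -[a b] [/= Pa Qb].
exists (P, Q) => //; split; exact: open_nbhs_nbhs.
Qed.

Lemma prod_chart_image E F M N (c : chart E M) (d : chart F N) U V :
  ch_map (prod_chart c d) @` (U `*` V) = (ch_map c @` U) `*` (ch_map d @` V).
Proof.
apply/seteqP; split.
- by move=> _ [[x y] [/= Ux Vy] <-]; split; [exists x | exists y].
- by move=> [a b] [/= [x Ux <-] [y Vy <-]]; exists (x, y).
Qed.

Lemma manifold_atlas_cancel E M (A : set (chart E M)) :
  is_manifold A -> atlas_cancel A.
Proof. by case. Qed.

Lemma manifold_open_chart_images E M (A : set (chart E M)) :
  is_manifold A -> open_chart_images A.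
Proof.
move=> [_ _ _ smooth_trans _] c Ac.
by have /= [+ _] := smooth_trans c c Ac Ac; rewrite setIid.
Qed.

Lemma atlas_cancel_prod E F M N (A : set (chart E M)) (B : set (chart F N)) :
  atlas_cancel A -> atlas_cancel B -> atlas_cancel (prod_atlas A B).
Proof. by move=> hA hB _ [c Ac [d Bd <-]] [x y] [/= dx dy]; rewrite /= hA ?hB. Qed.

Lemma open_chart_images_prod E F M N (A : set (chart E M)) (B : set (chart F N)) :
  open_chart_images A -> open_chart_images B -> open_chart_images (prod_atlas A B).
Proof.
by move=> hA hB _ [c Ac [d Bd <-]]; rewrite prod_chart_image; apply: open_setX; auto.
Qed.

Lemma atlas_open_chart_preimage E M (A : set (chart E M)) c (U : set E) :
  is_manifold A -> A c -> open U ->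
  atlas_open A [set y | ch_dom c y /\ U (ch_map c y)].
Proof.
move=> [_ _ cancelA smooth_trans _] Ac oU c' Ac'.
have [oD /(_ 0%N) [cont_trans _]] := smooth_trans c' c Ac' Ac.
rewrite (continuous_open_subspace _ oD) in cont_trans.
have := (continuous_inP _ oD).1 cont_trans _ oU.
match goal with |- open ?X -> open ?Y => suff <- : X = Y by [] end.
apply/seteqP; split.
- by move=> z [[y [dy' dy] <-]]; rewrite /= cancelA // => Uy; exists y.
- move=> z [y [[dy Uy] dy'] <-]; split; first by exists y.
  by rewrite /= cancelA.
Qed.

Lemma atlas_openI E M (A : set (chart E M)) (B1 B2 : set M) :
  atlas_cancel A -> atlas_open A B1 -> atlas_open A B2 -> atlas_open A (B1 `&` B2).
Proof.
move=> cancelA oB1 oB2 c Ac.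
have -> : ch_map c @` (B1 `&` B2 `&` ch_dom c)
    = ch_map c @` (B1 `&` ch_dom c) `&` ch_map c @` (B2 `&` ch_dom c).
  apply/seteqP; split.
  - by move=> _ [x [[B1x B2x] dx] <-]; split; exists x.
  - move=> _ [[x [B1x dx] <-] [y [B2y dy] exy]].
    have yx : y = x by rewrite -(cancelA _ Ac _ dy) exy cancelA.
    by subst y; exists x.
by apply: openI; [exact: oB1 | exact: oB2].
Qed.

Lemma atlas_open_local E M (A : set (chart E M)) (B : set M) :
  (forall x, B x -> exists2 B', atlas_open A B' & B' x /\ B' `<=` B) ->
  atlas_open A B.
Proof.
move=> locB c Ac; rewrite openE => _ [x [Bx dx] <-].
have [B' oB' [B'x sB'B]] := locB x Bx.
apply: (@filterS _ _ _ (ch_map c @` (B' `&` ch_dom c))).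
  by move=> _ [y [B'y dy] <-]; exists y => //; split => //; exact: sB'B.
by apply: open_nbhs_nbhs; split; [exact: oB' | exists x].
Qed.

Lemma atlas_open_prod_box E F M N (A : set (chart E M)) (B : set (chart F N))
    (W : set (M * N)) x y :
  is_manifold A -> is_manifold B -> atlas_open (prod_atlas A B) W -> W (x, y) ->
  exists W1, exists W2,
    [/\ atlas_open A W1, atlas_open B W2, W1 x, W2 y & W1 `*` W2 `<=` W].
Proof.
move=> mA mB oW Wxy.
have [_ coverA cancelA _ _] := mA; have [_ coverB cancelB _ _] := mB.
have [c Ac dcx] := coverA x; have [d Bd ddy] := coverB y.
have := oW (prod_chart c d) (ex_intro2 _ _ c Ac (ex_intro2 _ _ d Bd erefl)).
rewrite openE => /(_ (ch_map c x, ch_map d y)) [|[P Q] [/= nP nQ] sPQ].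
  by exists (x, y).
exists [set x' | ch_dom c x' /\ P° (ch_map c x')].
exists [set y' | ch_dom d y' /\ Q° (ch_map d y')].
split => //; try by apply: atlas_open_chart_preimage => //; exact: open_interior.
move=> [x' y'] [/= [dx' Px'] [dy' Qy']].
have [|[a b] [Wab [/= da db]] [eax eby]] := sPQ (ch_map c x', ch_map d y').
  by split; exact: interior_subset.
by rewrite -(cancelA _ Ac _ dx') -(cancelB _ Bd _ dy') -eax -eby !(cancelA, cancelB).
Qed.

Lemma atlas_continuous_comp E F G M N K (A : set (chart E M))
    (B : set (chart F N)) (C : set (chart G K)) (f : M -> N) (g : N -> K) :
  atlas_continuous A B f -> atlas_continuous B C g -> atlas_continuous A C (g \o f).
Proof. by move=> cf cg W /cg /cf. Qed.

Lemma atlas_continuous_fst E F M N (A : set (chart E M)) (B : set (chart F N)) :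
  open_chart_images B -> atlas_continuous (prod_atlas A B) A fst.
Proof.
move=> hB W oW _ [c Ac [d Bd <-]].
rewrite /= -setXT -setXI setTI prod_chart_image.
by apply: open_setX; [exact: oW | exact: hB].
Qed.

Lemma atlas_continuous_snd E F M N (A : set (chart E M)) (B : set (chart F N)) :
  open_chart_images A -> atlas_continuous (prod_atlas A B) B snd.
Proof.
move=> hA W oW _ [c Ac [d Bd <-]].
rewrite /= -setTX -setXI setTI prod_chart_image.
by apply: open_setX; [exact: hA | exact: oW].
Qed.

Lemma atlas_continuous_pair E F G M N K (A : set (chart E M))
    (B : set (chart F N)) (C : set (chart G K)) (u : M -> N) (v : M -> K) :
  atlas_cancel A -> is_manifold B -> is_manifold C ->
  atlas_continuous A B u -> atlas_continuous A C v ->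
  atlas_continuous A (prod_atlas B C) (fun x => (u x, v x)).
Proof.
move=> cancelA mB mC cu cv W oW; apply: atlas_open_local => x Wx.
have [W1 [W2 [oW1 oW2 W1u W2v sW]]] := atlas_open_prod_box mB mC oW Wx.
exists (u @^-1` W1 `&` v @^-1` W2); first by apply: atlas_openI; auto.
by split => // y [W1y W2y]; apply: sW.
Qed.

Lemma atlas_continuous_locally_constant E F M N (A : set (chart E M))
    (B : set (chart F N)) (f : M -> N) (S : set N) :
  atlas_continuous A B f -> (forall x, S (f x)) ->
  (forall y, S y -> exists U, atlas_open B U /\ U `&` S = [set y]) ->
  forall x, exists U, [/\ atlas_open A U, U x & forall x', U x' -> f x' = f x].
Proof.
move=> cf fS discS x; have [U [oU US]] := discS _ (fS x).
have [fxU _] : (U `&` S) (f x) by rewrite US.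
exists (f @^-1` U); split; [exact: cf | by [] | move=> x' Ux'].
have : (U `&` S) (f x') by split; [| exact: fS].
by rewrite US.
Qed.

End AtlasTopology.

Lemma src_tens_idm_inv (G0 G1 : Type) (o : twogroup_ops G0 G1) (f : G1) :
  is_2group o ->
  g2src o (g2tens1 o f (g2idm o (g2inv0 o (g2src o f)))) = g2one o.
Proof.
move=> [[idm_st _ _ _] [tens_st _ _] _ [_ _ tens_inv _] _].
by rewrite (tens_st _ _).1 (idm_st _).1 (tens_inv _).1.
Qed.

Theorem lemma2p6 (R : realType) (G0 G1 : Type) (o : twogroup_ops G0 G1)
  (E0 E1 Ec : tvsType R)
  (A0 : set (chart E0 G0)) (A1 : set (chart E1 G1))
  (Ac : set (chart Ec (composable o)))
  (H2 : is_2group o)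
  (HM0 : is_manifold A0) (HM1 : is_manifold A1) (HMc : is_manifold Ac)
  (Hs : smooth_map A1 A0 (g2src o)) (Ht : smooth_map A1 A0 (g2tgt o))
  (Hid : smooth_map A0 A1 (g2idm o))
  (Hcomp : smooth_map Ac A1 (fun p : composable o => g2mcomp o (sval p).1 (sval p).2))
  (Hm0 : smooth_map (prod_atlas A0 A0) A0 (fun p : G0 * G0 => g2tens0 o p.1 p.2))
  (Hm1 : smooth_map (prod_atlas A1 A1) A1 (fun p : G1 * G1 => g2tens1 o p.1 p.2))
  (Hi0 : smooth_map A0 A0 (g2inv0 o)) (Hi1 : smooth_map A1 A1 (g2inv1 o))
  (Ha : smooth_map (prod_atlas (prod_atlas A0 A0) A0) A1
          (fun p : (G0 * G0) * G0 => g2assoc o p.1.1 p.1.2 p.2))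
  (Hdisc : forall f : G1, g2src o f = g2one o ->
     exists B : set G1, atlas_open A1 B /\ B `&` (g2src o @^-1` [set g2one o]) = [set f]) :
  let F := fun p : (G0 * G0) * G0 =>
    g2tens1 o (g2assoc o p.1.1 p.1.2 p.2)
            (g2idm o (g2inv0 o (g2tens0 o (g2tens0 o p.1.1 p.1.2) p.2))) in
  forall p : (G0 * G0) * G0, exists B : set ((G0 * G0) * G0),
    [/\ atlas_open (prod_atlas (prod_atlas A0 A0) A0) B, B p
      & forall q, B q -> F q = F p].
Proof.
move=> F; set A3 := prod_atlas (prod_atlas A0 A0) A0.
have open0 := manifold_open_chart_images HM0.
have cancel3 : atlas_cancel A3.
  by apply: atlas_cancel_prod; [apply: atlas_cancel_prod |]; exact: manifold_atlas_cancel.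
have cont_tens2 : atlas_continuous A3 A0 (fun q => g2tens0 o q.1.1 q.1.2).
  exact: atlas_continuous_comp (atlas_continuous_fst (A := prod_atlas A0 A0) open0) Hm0.1.
have cont_tens3 : atlas_continuous A3 A0 (fun q => g2tens0 o (g2tens0 o q.1.1 q.1.2) q.2).
  have cont_snd := atlas_continuous_snd (B := A0) (open_chart_images_prod open0 open0).
  exact: atlas_continuous_comp (atlas_continuous_pair cancel3 HM0 HM0 cont_tens2 cont_snd) Hm0.1.
have cont_F : atlas_continuous A3 A1 F.
  have cont_idm := atlas_continuous_comp (atlas_continuous_comp cont_tens3 Hi0.1) Hid.1.
  exact: atlas_continuous_comp (atlas_continuous_pair cancel3 HM1 HM1 Ha.1 cont_idm) Hm1.1.
apply: (atlas_continuous_locally_constant cont_F _ Hdisc) => -[[g h] k].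
have [_ _ _ _ [src_assoc _ _ _ _]] := H2.
by rewrite /F /= -(src_assoc g h k).1; apply: src_tens_idm_inv.
Qed.
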